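(* Let $K/F$ be a cyclic Galois extension of number fields of degree $m$ with $\mathrm{Gal}(K/F)=\langle\sigma\rangle$, with rings of integers $\mathcal{O}_F\subset\mathcal{O}_K$. Let $d\in\mathcal{O}_K^\times$ be such that $t^m-d$ is irreducible in $K[t;\sigma]$, and let $\Lambda=\mathcal{O}_K[t;\sigma]/\mathcal{O}_K[t;\sigma](t^m-d)$ be the natural order of the nonassociative cyclic division algebra $(K/F,\sigma,d)$. Let $\mathcal{I}=\mathfrak{q}_1^{s_1}\cdots\mathfrak{q}_t^{s_t}$ be a non-zero ideal of $\mathcal{O}_F$, with $\mathfrak{q}_1,\dots,\mathfrak{q}_t$ distinct prime ideals of $\mathcal{O}_F$. Then $$\Lambda/\mathcal{I}\Lambda\cong\big((\mathcal{O}_K/\mathfrak{q}_1^{s_1}\mathcal{O}_K)/(\mathcal{O}_F/\mathfrak{q}_1^{s_1}),\overline{\sigma},d+\mathfrak{q}_1^{s_1}\mathcal{O}_K\big)\times\dots\times\big((\mathcal{O}_K/\mathfrak{q}_t^{s_t}\mathcal{O}_K)/(\mathcal{O}_F/\mathfrak{q}_t^{s_t}),\overline{\sigma},d+\mathfrak{q}_t^{s_t}\mathcal{O}_K\big),$$ where in the $j$-th factor $\overline{\sigma}(u+\mathfrak{q}_j^{s_j}\mathcal{O}_K)=\sigma(u)+\mathfrak{q}_j^{s_j}\mathcal{O}_K$.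
   Context: For a unital associative ring $S$ with injective endomorphism $\sigma$, $S[t;\sigma]$ is the skew polynomial ring with $ta=\sigma(a)t$. For monic $f$ of degree $m$, the Petit algebra $S[t;\sigma]/S[t;\sigma]f$ is the set of polynomials of degree $<m$ with multiplication $g\circ h=gh\bmod_r f$ (remainder of right division by $f$), a unital nonassociative ring. For commutative rings $S_0\subset S$ with $S_0\subset\mathrm{Fix}(\sigma)$ and $c\in S$, the generalized nonassociative cyclic algebra $(S/S_0,\sigma,c)$ is $S[t;\sigma]/S[t;\sigma](t^m-c)$ regarded as an $S_0$-algebra. The direct product of nonassociative rings has componentwise operations. *)

From HB Require Import structures.
From mathcomp Require Import all_boot all_order all_algebra all_fingroup all_field.
Set Implicit Arguments. Unset Strict Implicit. Unset Printing Implicit Defensive.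
Import GRing.Theory.
Local Open Scope ring_scope.

Section Skew.
Variables (R : nzRingType) (sig : R -> R).

(* (sum a_i t^i)(sum b_j t^j) = sum a_i sig^i(b_j) t^(i+j)   (t a = sig(a) t) *)
Definition skmul (p q : {poly R}) : {poly R} :=
  \poly_(k < (size p + size q).-1)
     \sum_(i < k.+1) p`_i * iter i sig q`_(k - i).

Definition polyIn (C : R -> Prop) (p : {poly R}) := forall i, C p`_i.

Definition skunit_in (C : R -> Prop) (p : {poly R}) :=
  exists q, polyIn C q /\ skmul p q = 1 /\ skmul q p = 1.

Definition skirreducible_in (C : R -> Prop) (f : {poly R}) :=
  [/\ polyIn C f, f != 0, ~ skunit_in C f &
      forall g h, polyIn C g -> polyIn C h -> f = skmul g h ->
        skunit_in C g \/ skunit_in C h].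

(* remainder of right division by a monic f: p = q f + r, size r < size f,
   computed by the division algorithm (subtract (lead p) t^k f) *)
Fixpoint skrmod_rec (f : {poly R}) (n : nat) (p : {poly R}) : {poly R} :=
  match n with
  | 0 => p
  | n'.+1 =>
      if (size p < size f)%N then p
      else skrmod_rec f n'
             (p - skmul (lead_coef p *: 'X^(size p - size f)) f)
  end.
Definition skrmod (f p : {poly R}) := skrmod_rec f (size p) p.

Definition petit_mul (f g h : {poly R}) := skrmod f (skmul g h).
End Skew.

Section Ideals.
Variable (R : nzRingType).

Definition is_ideal (S I : R -> Prop) :=
  [/\ forall x, I x -> S x, I 0,
      forall x y, I x -> I y -> I (x + y),
      forall x, I x -> I (- x) &
      forall r x, S r -> I x -> I (r * x)].

Definition prime_ideal (S P : R -> Prop) :=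
  [/\ is_ideal S P, ~ P 1 &
      forall a b, S a -> S b -> P (a * b) -> P a \/ P b].

(* product of ideals (also: extension A*B of A to a larger ring B) *)
Definition idealM (A B : R -> Prop) : R -> Prop :=
  fun x => exists n (a b : 'I_n -> R),
    [/\ forall i, A (a i), forall i, B (b i) & x = \sum_(i < n) a i * b i].

Definition idealX (S A : R -> Prop) (n : nat) : R -> Prop :=
  iter n (idealM A) S.
End Ideals.

(* A/eA (elements: representatives satisfying PA) is isomorphic to B/eB:
   f induces a well-defined bijection of the quotients preserving +, * and 1. *)
Definition quot_ring_iso (A B : Type)
  (PA : A -> Prop) (eA : A -> A -> Prop) (addA mulA : A -> A -> A) (oneA : A)
  (PB : B -> Prop) (eB : B -> B -> Prop) (addB mulB : B -> B -> B) (oneB : B)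
  : Prop :=
  exists f : A -> B,
    [/\ forall a, PA a -> PB (f a),
        forall a a', PA a -> PA a' -> (eA a a' <-> eB (f a) (f a')),
        forall b, PB b -> (exists2 a, PA a & eB (f a) b),
        forall a a', PA a -> PA a' -> eB (f (addA a a')) (addB (f a) (f a')) &
        forall a a', PA a -> PA a' -> eB (f (mulA a a')) (mulB (f a) (f a')) /\
        eB (f oneA) oneB].

Section NF.
Variable L : splittingFieldType rat.

Definition ring_of_integers (E : {subfield L}) : L -> Prop :=
  fun x => x \in E /\ integralOver (intr : int -> L) x.

(* the natural order Lambda = O_K[t;sig]/O_K[t;sig](t^m - d) : polynomials of
   degree < m with coefficients in O_K *)
Definition in_order (OK : L -> Prop) (m : nat) (p : {poly L}) :=
  (size p <= m)%N /\ polyIn OK p.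

Definition ideal_times_order (sig : L -> L) (f : {poly L})
    (OK : L -> Prop) (m : nat) (I : L -> Prop) : {poly L} -> Prop :=
  fun p => exists n (a : 'I_n -> L) (l : 'I_n -> {poly L}),
    [/\ forall i, I (a i), forall i, in_order OK m (l i) &
        p = \sum_(i < n) petit_mul sig f (a i)%:P (l i)].

(* congruence of polynomials coefficientwise modulo an ideal J of O_K;
   polynomials over O_K/J are represented by lifts to O_K *)
Definition poly_cong (J : L -> Prop) (p q : {poly L}) :=
  forall i, J (p - q)`_i.
End NF.

From HB Require Import structures.
From mathcomp Require Import all_boot all_order all_algebra all_fingroup all_field.
From mathcomp Require Import ring.
From Stdlib Require Import Classical.
Set Implicit Arguments. Unset Strict Implicit. Unset Printing Implicit Defensive.
Import GRing.Theory.
Local Open Scope ring_scope.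

(* The isomorphism is induced by the diagonal map p |-> (p, ..., p): sums and
   Petit products are preserved on the nose, since every factor computes with
   the same representatives and the same multiplication.  The ideal I.Lambda
   consists of the polynomials of degree < m with coefficients in I.O_K.
   Nonzero primes of O_F are maximal, so the powers q_j^e_j are pairwise
   comaximal, and the Chinese remainder theorem gives both
   I.O_K = /\_j q_j^e_j O_K (injectivity) and elements eps_j of O_F with
   eps_j = 1 mod q_j^e_j and eps_j = 0 mod q_k^e_k for k <> j, so that
   sum_j eps_j b_j lifts any (b_j)_j (surjectivity). *)

(* [idealM A B] and [ideal_times_order] unfold to instances of [sum_of_products],
   with [g] the ring product, resp. the Petit product by a constant. *)
Section SumsOfProducts.
Variables (X Y : Type) (V : nmodType) (g : X -> Y -> V).
Variables (A : X -> Prop) (B : Y -> Prop).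

Definition sum_of_products (v : V) := exists n (a : 'I_n -> X) (b : 'I_n -> Y),
  [/\ forall i, A (a i), forall i, B (b i) & v = \sum_(i < n) g (a i) (b i)].

Lemma sum_of_products0 : sum_of_products 0.
Proof.
have ord0_elim (Z : Type) : 'I_0 -> Z by case.
by exists 0%N, (ord0_elim X), (ord0_elim Y); split; [case | case | rewrite big_ord0].
Qed.

Lemma sum_of_productsD v w :
  sum_of_products v -> sum_of_products w -> sum_of_products (v + w).
Proof.
case=> n [a [b [Aa Bb ->]]] [k [a' [b' [Aa' Bb' ->]]]].
pose glue Z (u : 'I_n -> Z) (u' : 'I_k -> Z) i :=
  match split i with inl i1 => u i1 | inr i2 => u' i2 end.
exists (n + k)%N, (glue _ a a'), (glue _ b b'); split.
- by move=> i; rewrite /glue; case: (split i).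
- by move=> i; rewrite /glue; case: (split i).
by rewrite big_split_ord /glue; congr (_ + _); apply: eq_bigr => i _;
  rewrite ?(unsplitK (inl _ i)) ?(unsplitK (inr _ i)).
Qed.

Lemma sum_of_products_sum n (v : 'I_n -> V) :
  (forall i, sum_of_products (v i)) -> sum_of_products (\sum_(i < n) v i).
Proof.
by move=> Sv; apply: big_ind => //; [exact: sum_of_products0 | exact: sum_of_productsD].
Qed.
End SumsOfProducts.

Section IdealTheory.
Variable R : comNzRingType.
Implicit Types (S A B C T : R -> Prop) (x y : R).

Definition subring S := [/\ S 0, S 1, forall x y, S x -> S y -> S (x + y),
  forall x, S x -> S (- x) & forall x y, S x -> S y -> S (x * y)].

Definition comax A B := exists a b, [/\ A a, B b & a + b = 1].

Lemma subring1 S : subring S -> S 1. Proof. by case. Qed.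

Lemma subring_ideal S : subring S -> is_ideal S S. Proof. by case. Qed.

Section IdealAxioms.
Variables S A : R -> Prop.
Hypothesis IA : is_ideal S A.

Lemma ideal_sub x : A x -> S x.
Proof. by case: IA => h _ _ _ _; apply: h. Qed.

Lemma ideal0 : A 0.
Proof. by case: IA. Qed.

Lemma idealD x y : A x -> A y -> A (x + y).
Proof. by case: IA => _ _ h _ _; apply: h. Qed.

Lemma idealN x : A x -> A (- x).
Proof. by case: IA => _ _ _ h _; apply: h. Qed.

Lemma ideal_mull r x : S r -> A x -> A (r * x).
Proof. by case: IA => _ _ _ _ h; apply: h. Qed.

Lemma ideal_mulr r x : S r -> A x -> A (x * r).
Proof. by rewrite mulrC; apply: ideal_mull. Qed.

Lemma ideal_sum n (G : 'I_n -> R) : (forall i, A (G i)) -> A (\sum_(i < n) G i).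
Proof. by move=> AG; apply: big_ind => //; [exact: ideal0 | exact: idealD]. Qed.
End IdealAxioms.

Lemma idealM_mul A B a b : A a -> B b -> idealM A B (a * b).
Proof.
by move=> Aa Bb; exists 1%N, (fun _ => a), (fun _ => b); split => //; rewrite big_ord1.
Qed.

Lemma idealM0 A B : idealM A B 0. Proof. exact: (@sum_of_products0 _ _ _ *%R). Qed.

Lemma idealMD A B x y : idealM A B x -> idealM A B y -> idealM A B (x + y).
Proof. exact: (@sum_of_productsD _ _ _ *%R). Qed.

Lemma idealM_scale A A' B c x : (forall a, A a -> A' (c * a)) ->
  idealM A B x -> idealM A' B (c * x).
Proof.
move=> AA' [n [a [b [Aa Bb ->]]]]; exists n, (fun i => c * a i), b.
by split=> // [i|]; [apply: AA' | rewrite mulr_sumr; under eq_bigr do rewrite mulrA].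
Qed.

Lemma idealM_monol A A' B x :
  (forall y, A y -> A' y) -> idealM A B x -> idealM A' B x.
Proof.
by move=> AA' [n [a [b [Aa Bb ->]]]]; exists n, a, b; split=> // i; apply: AA'.
Qed.

Lemma idealM_subl S A B x : is_ideal S A -> (forall y, B y -> S y) ->
  idealM A B x -> A x.
Proof.
move=> IA BS [n [a [b [Aa Bb ->]]]]; apply: (ideal_sum IA) => i.
by apply: (ideal_mulr IA); [apply: BS | apply: Aa].
Qed.

Lemma idealM_subr S A B x : (forall y, A y -> S y) -> is_ideal S B ->
  idealM A B x -> B x.
Proof.
move=> AS IB [n [a [b [Aa Bb ->]]]]; apply: (ideal_sum IB) => i.
by apply: (ideal_mull IB); [apply: AS | apply: Bb].
Qed.

Lemma idealM_ideal S A B : is_ideal S A -> is_ideal S B -> is_ideal S (idealM A B).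
Proof.
move=> IA IB; split=> [x|||x Mx|r x Sr Mx].
- by move/(idealM_subl IA (ideal_sub IB)); apply: ideal_sub.
- exact: idealM0.
- exact: idealMD.
- by rewrite -mulN1r; apply: idealM_scale Mx => a; rewrite mulN1r; exact: idealN IA a.
- by apply: idealM_scale Mx => a; exact: ideal_mull IA r a Sr.
Qed.

Lemma idealX_ideal S A n : subring S -> is_ideal S A -> is_ideal S (idealX S A n).
Proof.
by move=> SS IA; elim: n => [|n IH] /=; [exact: subring_ideal | exact: idealM_ideal].
Qed.

Lemma idealX_sub S A n x : (0 < n)%N -> subring S -> is_ideal S A ->
  idealX S A n x -> A x.
Proof.
by case: n => // n _ SS IA; apply: (idealM_subl IA (ideal_sub (idealX_ideal n SS IA))).
Qed.

Lemma comaxC A B : comax A B -> comax B A.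
Proof. by case=> a [b [Aa Bb ab1]]; exists b, a; rewrite addrC. Qed.

Lemma comax_full S C : subring S -> is_ideal S C -> comax C S.
Proof.
by move=> SS IC; exists 0, 1; split; [exact: ideal0 IC | exact: subring1 | rewrite add0r].
Qed.

Lemma comaxM S C A B : is_ideal S C -> (forall y, A y -> S y) ->
  comax C A -> comax C B -> comax C (idealM A B).
Proof.
move=> IC AS [c [a [Cc Aa ca1]]] [c' [b [Cc' Bb cb1]]].
exists (c + a * c'), (a * b); split; last by rewrite -addrA -mulrDr cb1 mulr1.
  by apply: (idealD IC) => //; apply: (ideal_mull IC) => //; apply: AS.
exact: idealM_mul.
Qed.

Lemma comaxX S C A n : subring S -> is_ideal S C -> is_ideal S A ->
  comax C A -> comax C (idealX S A n).
Proof.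
move=> SS IC IA CA; elim: n => [|n IH] /=; first exact: comax_full.
exact: (comaxM IC (ideal_sub IA)).
Qed.

Lemma comaxXX S A B n k : subring S -> is_ideal S A -> is_ideal S B ->
  comax A B -> comax (idealX S A n) (idealX S B k).
Proof.
move=> SS IA IB AB; apply/comaxC/comaxX => //; first exact: idealX_ideal.
exact/comaxC/comaxX.
Qed.

Section FiniteProducts.
Variables (I : eqType) (S : R -> Prop) (Q : I -> R -> Prop).
Hypothesis SS : subring S.
Hypothesis IQ : forall j, is_ideal S (Q j).
Local Notation prodQ r := (\big[@idealM R/S]_(j <- r) Q j).

Lemma big_idealM_ideal r : is_ideal S (prodQ r).
Proof.
elim: r => [|j r IH]; first by rewrite big_nil; apply: subring_ideal.
by rewrite big_cons; apply: idealM_ideal.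
Qed.

Lemma big_idealM_sub r j x : j \in r -> prodQ r x -> Q j x.
Proof.
elim: r => [|k r IH] //; rewrite inE big_cons => /orP[/eqP->|jr] Qx.
  exact: idealM_subl (IQ k) (ideal_sub (big_idealM_ideal r)) Qx.
exact/IH/(idealM_subr (ideal_sub (IQ k)) (big_idealM_ideal r)).
Qed.

Lemma comax_big_idealM C r : is_ideal S C -> (forall k, k \in r -> comax C (Q k)) ->
  comax C (prodQ r).
Proof.
move=> IC; elim: r => [|k r IH] CQ; first by rewrite big_nil; apply: comax_full.
rewrite big_cons; apply: (comaxM IC (ideal_sub (IQ k))).
  by apply: CQ; rewrite mem_head.
by apply: IH => k' k'r; apply: CQ; rewrite inE k'r orbT.
Qed.

Lemma big_idealM_inter T r x : uniq r ->
  (forall i j, i \in r -> j \in r -> i != j -> comax (Q i) (Q j)) ->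
  T x -> (forall j, j \in r -> idealM (Q j) T x) -> idealM (prodQ r) T x.
Proof.
elim: r => [|j r IH] /= => [_ _ Tx _ | /andP[jr Ur] cQ Tx QTx].
  by rewrite big_nil -[x]mul1r; apply: idealM_mul => //; exact: subring1.
have rTx : idealM (prodQ r) T x.
  apply: IH => // [i k ir kr|k kr]; first by apply: cQ; rewrite inE ?ir ?kr orbT.
  by apply: QTx; rewrite inE kr orbT.
have [a [b [Qa Rb ab1]]] : comax (Q j) (prodQ r).
  apply: comax_big_idealM => // k kr; apply: cQ; rewrite ?inE ?eqxx ?kr ?orbT //.
  by apply: contraNneq jr => ->.
rewrite -[x]mul1r -ab1 mulrDl big_cons; apply: idealMD.
  by apply: idealM_scale rTx => c Rc; apply: idealM_mul.
apply: idealM_scale (QTx j (mem_head _ _)) => c Qc.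
by rewrite mulrC; apply: idealM_mul.
Qed.
End FiniteProducts.

Lemma crt_idempotent (I : finType) S (Q : I -> R -> Prop) : subring S ->
  (forall j, is_ideal S (Q j)) -> (forall i j, i != j -> comax (Q i) (Q j)) ->
  forall j, exists e, [/\ S e, Q j (e - 1) & forall k, k != j -> Q k e].
Proof.
move=> SS IQ cQ j; set r := [seq k <- index_enum I | k != j].
have [a [e [Qa Re ae1]]] : comax (Q j) (\big[@idealM R/S]_(k <- r) Q k).
  apply: comax_big_idealM => // k; rewrite mem_filter => /andP[kj _].
  by apply: cQ; rewrite eq_sym.
exists e; split.
- exact: ideal_sub (big_idealM_ideal SS IQ r) _ Re.
- by rewrite -ae1 opprD addrCA subrr addr0; exact: idealN (IQ j) _ Qa.
- move=> k kj; apply: big_idealM_sub Re => //.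
  by rewrite mem_filter kj mem_index_enum.
Qed.
End IdealTheory.

Lemma monic_ind (R : nzRingType) (P : {poly R} -> Prop) :
  P 1 -> (forall h c, h \is monic -> P h -> P (h * 'X + c%:P)) ->
  forall g, g \is monic -> P g.
Proof.
move=> P1 PXC g; elim: {g}(size g) {-2}g (leqnn (size g)) => [|n IH] g sg mg.
  by move: sg; rewrite leqn0 size_poly_eq0 (negbTE (monic_neq0 mg)).
have [sg1|sg1] := leqP (size g) 1.
  suff -> : g = 1 by [].
  have /eqP/size_poly1P[c _ gc] : size g = 1%N.
    by apply/eqP; rewrite eqn_leq sg1 lt0n size_poly_eq0 monic_neq0.
  by move: mg; rewrite gc monicE lead_coefC => /eqP->.
have gE : g = drop_poly 1 g * 'X + (g`_0)%:P.
  rewrite -[g in LHS](poly_take_drop 1) expr1 addrC; congr (_ + _).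
  by apply/polyP => i; rewrite coef_take_poly coefC; case: i.
have mh : drop_poly 1 g \is monic.
  rewrite monicE /lead_coef size_drop_poly coef_drop_poly subn1 addn1 prednK //.
  by rewrite -subn1 subn_gt0.
rewrite gE; apply: PXC mh (IH _ _ mh).
by rewrite size_drop_poly subn1 -ltnS (ltn_predK sg1).
Qed.

Section RingOfIntegers.
Variables (L : splittingFieldType rat) (E : {subfield L}).
Local Notation OE := (ring_of_integers E).

Lemma ring_of_integers_subring : subring OE.
Proof.
split.
- by split; [rewrite rpred0 | apply: integral0].
- by split; [rewrite rpred1 | apply: integral1].
- by move=> x y [Ex Ix] [Ey Iy]; split; [rewrite rpredD | apply: integral_add].
- by move=> x [Ex Ix]; split; [rewrite rpredN | apply: integral_opp].
- by move=> x y [Ex Ix] [Ey Iy]; split; [rewrite rpredM | apply: integral_mul].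
Qed.

Lemma ring_of_integers_int (z : int) : OE (intr z).
Proof. by split; [rewrite rpred_int | apply: integral_id]. Qed.

Lemma ring_of_integers_nat n : OE n%:R.
Proof. exact: ring_of_integers_int n. Qed.

Lemma ring_of_integersS (E' : {subfield L}) x :
  (E <= E')%VS -> OE x -> ring_of_integers E' x.
Proof. by move=> EE' [Ex Ix]; split=> //; apply: (subvP EE'). Qed.

Lemma ring_of_integers_horner (g : {poly int}) x : OE x -> OE (map_poly intr g).[x].
Proof.
move=> Ox; have [O0 _ OD _ OM] := ring_of_integers_subring.
elim/poly_ind: g => [|g c IH]; first by rewrite rmorph0 horner0.
rewrite rmorphD rmorphM /= map_polyX map_polyC !hornerE.
by apply: OD; [apply: OM | apply: ring_of_integers_int].
Qed.

Lemma horner_intr_mulXC (g : {poly int}) (c : int) (x : L) :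
  (map_poly intr (g * 'X + c%:P)).[x] = (map_poly intr g).[x] * x + intr c.
Proof. by rewrite rmorphD rmorphM /= map_polyX map_polyC !hornerE. Qed.

Variable P : L -> Prop.
Hypothesis PP : prime_ideal OE P.

Let IP : is_ideal OE P. Proof. by case: PP. Qed.

Lemma prime_ideal_int a : P a -> a != 0 -> exists2 c : int, c != 0 & P (intr c).
Proof.
case: IP => PO _ _ PN PM Pa a0; have [_ [g mg /eqP]] := PO _ Pa.
move: g mg; apply: monic_ind => [|h c mh IH].
  by rewrite rmorph1 hornerC => /eqP; rewrite oner_eq0.
rewrite horner_intr_mulXC; have [-> /eqP|c0 ha] := eqVneq c 0.
  by rewrite rmorph0 addr0 mulf_eq0 (negbTE a0) orbF => /eqP; apply: IH.
exists c => //; have -> : intr c = - ((map_poly intr h).[a] * a).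
  by apply/eqP; rewrite -subr_eq0 opprK addrC ha.
by apply: PN; apply: PM => //; exact/ring_of_integers_horner/PO.
Qed.

Lemma prime_ideal_prime : (exists2 a, P a & a != 0) -> exists2 p, prime p & P p%:R.
Proof.
case=> a Pa a0; have [c c0 Pc] := prime_ideal_int Pa a0.
have {Pc} : P `|c|%N%:R.
  by case: c c0 Pc => n; rewrite ?NegzE ?rmorphN //= => _ /(idealN IP); rewrite opprK.
case: PP => _ P1 Pprime; have : (0 < `|c|)%N by rewrite absz_gt0.
elim/ltn_ind: `|c|%N => n IH n0 Pn.
have [n1|n1] := leqP n 1.
  by move: Pn; have -> : n = 1%N by apply/eqP; rewrite eqn_leq n1.
have pdivK : n = (pdiv n * (n %/ pdiv n))%N by rewrite mulnC divnK // pdiv_dvd.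
move: Pn; rewrite pdivK natrM.
case/(Pprime _ _ (ring_of_integers_nat _) (ring_of_integers_nat _)) => Pd.
  by exists (pdiv n); rewrite ?pdiv_prime.
apply: IH Pd; first by rewrite ltn_Pdiv ?prime_gt1 ?pdiv_prime // ltnW.
by rewrite divn_gt0 ?pdiv_gt0 // dvdn_leq ?pdiv_dvd // ltnW.
Qed.

(* Take a monic g over Z with g(x) = 0 in P and write g = h X + c.  If c lies in
   P then so does h(x), and we descend to h; otherwise the prime p in P does not
   divide c, and a Bezout relation u c + v p = 1 inverts x modulo P. *)
Lemma prime_ideal_maximal x : (exists2 a, P a & a != 0) -> OE x -> ~ P x ->
  exists2 y, OE y & P (1 - x * y).
Proof.
move=> Pnz Ox Px; have [p p_pr Pp] := prime_ideal_prime Pnz.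
have [_ _ OD ON OM] := ring_of_integers_subring.
case: PP => [[_ P0 PD PN PM] P1 Pprime]; have [_ [g mg /eqP gx]] := Ox.
have : P (map_poly intr g).[x] by rewrite gx.
move: g mg {gx}; apply: monic_ind => [|h c mh IH]; first by rewrite rmorph1 hornerC.
rewrite horner_intr_mulXC; set hx := _.[x] => Phc.
have Ohx : OE hx by apply: ring_of_integers_horner.
have [Pc|Pc] := classic (P (intr c)).
  have : P (hx * x) by rewrite -(addrK (intr c) (hx * x)); apply: PD => //; apply: PN.
  by case/Pprime => //; apply: OM.
have cop : coprime p `|c|.
  rewrite prime_coprime //; apply: contra_notN Pc => pc.
  have /dvdzP[k ->] : (p%:Z %| c)%Z by [].
  by rewrite rmorphM /= -pmulrn; apply: PM => //; apply: ring_of_integers_int.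
have [u [v uv1]] : exists u v, u * c + v * p%:Z = 1.
  by have [u [v]] := Bezoutz c p; rewrite /gcdz gcdnC (eqP cop) => ?; exists u, v.
have {}uv1 : intr u * intr c + intr v * p%:R = 1 :> L.
  by rewrite pmulrn -!rmorphM -rmorphD uv1 rmorph1.
exists (- (intr u * hx)); first by apply/ON/OM => //; apply: ring_of_integers_int.
have -> : 1 - x * - (intr u * hx) = intr u * (hx * x + intr c) + intr v * p%:R.
  by rewrite -{1}uv1; ring.
by apply: PD; apply: PM => //; apply: ring_of_integers_int.
Qed.
End RingOfIntegers.

Section DistinctPrimes.
Variables (L : splittingFieldType rat) (E : {subfield L}).
Local Notation OE := (ring_of_integers E).
Variables P P' : L -> Prop.
Hypotheses (PP : prime_ideal OE P) (PP' : prime_ideal OE P').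

Lemma comax_prime_ideals : (exists2 a, P a & a != 0) -> (exists2 a, P' a & a != 0) ->
  ~ (forall x, P x <-> P' x) -> comax P P'.
Proof.
have comax_of_not_sub Q Q' : prime_ideal OE Q -> prime_ideal OE Q' ->
    (exists2 a, Q' a & a != 0) -> forall x, Q x -> ~ Q' x -> comax Q Q'.
  move=> [IQ _ _] PQ' Q'nz x Qx Q'x.
  have [y Oy Q'xy] := prime_ideal_maximal PQ' Q'nz (ideal_sub IQ Qx) Q'x.
  exists (x * y), (1 - x * y); split=> //; first exact: (ideal_mulr IQ Oy Qx).
  by rewrite addrC subrK.
move=> Pnz P'nz neqPP'; apply: NNPP => nc; apply: neqPP' => x.
split=> Px; apply: NNPP => nPx.
  by apply/nc/(comax_of_not_sub _ _ PP PP' P'nz x).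
by apply/nc/comaxC/(comax_of_not_sub _ _ PP' PP Pnz x).
Qed.

Lemma comax_idealX_prime_ideals e e' :
  (exists2 a, idealX OE P e a & a != 0) -> (exists2 a, idealX OE P' e' a & a != 0) ->
  ~ (forall x, P x <-> P' x) -> comax (idealX OE P e) (idealX OE P' e').
Proof.
have SO := ring_of_integers_subring E; have [[IP _ _] [IP' _ _]] := (PP, PP').
case: e => [_ _ _|e]; first exact/comaxC/comax_full/idealX_ideal.
case: e' => [_ _ _|e']; first exact/comax_full/idealX_ideal.
move=> [a Pa a0] [a' Pa' a'0] neqPP'; apply: comaxXX => //.
by apply: comax_prime_ideals; [exists a | exists a' | ] => //;
  [exact: (idealX_sub _ SO IP Pa) | exact: (idealX_sub _ SO IP' Pa')].
Qed.
End DistinctPrimes.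

Section PetitScalar.
Variables (R : nzRingType) (sig : R -> R).

Lemma skmulC (a : R) (l : {poly R}) : skmul sig a%:P l = a *: l.
Proof.
apply/polyP => k; rewrite coef_poly coefZ big_ord_recl coefC subn0 /=.
rewrite big1 => [|i _]; last by rewrite coefC mul0r.
rewrite addr0; case: ltnP => // /(leq_trans _) sl; have [->|a0] := eqVneq a 0.
  by rewrite mul0r.
by rewrite nth_default ?mulr0 // sl // size_polyC a0.
Qed.

Lemma skrmod_small (f p : {poly R}) : (size p < size f)%N -> skrmod sig f p = p.
Proof. by rewrite /skrmod => spf; case: (size p) => //= n; rewrite spf. Qed.

Lemma petit_mulC (f l : {poly R}) (a : R) : (size l < size f)%N ->
  petit_mul sig f a%:P l = a *: l.
Proof.
move=> slf; rewrite /petit_mul skmulC skrmod_small //.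
exact: leq_ltn_trans (size_scale_leq _ _) slf.
Qed.
End PetitScalar.

Section IdealTimesOrder.
Variables (L : splittingFieldType rat) (sig : L -> L) (f : {poly L}).
Variables (OK I : L -> Prop) (m : nat).
Hypotheses (size_f : size f = m.+1) (OK0 : OK 0).

Lemma in_order_scaleXn c i : OK c -> (i < m)%N -> in_order OK m (c *: 'X^i).
Proof.
move=> OKc im; split; first by rewrite (leq_trans (size_scale_leq _ _)) // size_polyXn.
by move=> k; rewrite coefZ coefXn; case: eqP; rewrite ?mulr1 ?mulr0.
Qed.

Lemma ideal_times_orderE (p : {poly L}) : (size p <= m)%N ->
  ideal_times_order sig f OK m I p <-> polyIn (idealM I OK) p.
Proof.
have petitC a l : in_order OK m l -> petit_mul sig f a%:P l = a *: l.
  by case=> sl _; apply: petit_mulC; rewrite size_f ltnS.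
move=> sp; split=> [[n [a [l [Ia Ol ->]]]] i | Ip].
  exists n, a, (fun k => (l k)`_i); split=> // [k|]; first by case: (Ol k).
  by rewrite coef_sum; apply: eq_bigr => k _; rewrite petitC ?coefZ.
have -> : p = \sum_(i < m) p`_i *: 'X^i.
  rewrite -poly_def; apply/polyP => k; rewrite coef_poly.
  by case: ltnP => // km; rewrite nth_default // (leq_trans sp km).
apply: (sum_of_products_sum (g := fun a l => petit_mul sig f a%:P l)) => i.
have [n [a [o [Ia Oo ->]]]] := Ip i.
exists n, a, (fun k => o k *: 'X^i); split=> // [k|].
  exact: in_order_scaleXn.
rewrite scaler_suml; apply: eq_bigr => k _.
by rewrite petitC ?scalerA //; exact: in_order_scaleXn.
Qed.
End IdealTimesOrder.

Section OrderCRT.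
Variables (L : splittingFieldType rat) (F K : {subfield L}).
Hypothesis FK : (F <= K)%VS.
Local Notation OF := (ring_of_integers F).
Local Notation OK := (ring_of_integers K).
Variables (t : nat) (Q : 'I_t -> L -> Prop).
Hypothesis IQ : forall j, is_ideal OF (Q j).
Hypothesis Qcomax : forall i j, i != j -> comax (Q i) (Q j).

Let SF := ring_of_integers_subring F.
Let SK := ring_of_integers_subring K.

Lemma idealM_big_ring_of_integers x : OK x ->
  idealM (\big[@idealM L/OF]_(j < t) Q j) OK x <-> forall j, idealM (Q j) OK x.
Proof.
move=> OKx; split=> [Qx j | Qx].
  by apply: idealM_monol Qx => y; apply: big_idealM_sub; rewrite ?mem_index_enum.
by apply: (big_idealM_inter SF IQ (index_enum_uniq _)) OKx _ => [i j _ _|j _];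
  [apply: Qcomax | apply: Qx].
Qed.

Lemma order_crt m (b : 'I_t -> {poly L}) : (forall j, in_order OK m (b j)) ->
  exists2 p, in_order OK m p & forall j, poly_cong (idealM (Q j) OK) p (b j).
Proof.
move=> Ob; have [O0 _ OD _ OM] := SK.
have /fin_all_exists[eps epsP] := crt_idempotent SF IQ Qcomax.
exists (\sum_(k < t) eps k *: b k).
  apply: big_ind; first by split=> [|i]; rewrite ?size_poly0 ?coef0.
    move=> p p' [sp Op] [sp' Op']; split=> [|i]; last by rewrite coefD; apply: OD.
    by rewrite (leq_trans (size_polyD _ _)) // geq_max sp sp'.
  move=> k _; have [sb Ob'] := Ob k; split=> [|i].
    exact: leq_trans (size_scale_leq _ _) sb.
  have [OFe _ _] := epsP k.
  by rewrite coefZ; apply: OM (Ob' i); apply: ring_of_integersS FK OFe.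
move=> j i; rewrite coefB coef_sum (bigD1 j) //= coefZ addrAC.
rewrite -[X in _ - X]mul1r -mulrBl.
apply: idealMD; first by apply: idealM_mul; [case: (epsP j) | case: (Ob j)].
apply: big_ind => [|x y|k kj]; [exact: idealM0 | exact: idealMD |].
rewrite coefZ; apply: idealM_mul; last by case: (Ob k).
by case: (epsP k) => _ _; apply; rewrite eq_sym.
Qed.

Variables (sig : L -> L) (f : {poly L}) (m : nat) (I : L -> Prop).
Hypothesis size_f : size f = m.+1.
Hypothesis I_prod : forall x, I x <-> (\big[@idealM L/OF]_(j < t) Q j) x.

Lemma ideal_times_order_congE p p' : in_order OK m p -> in_order OK m p' ->
  ideal_times_order sig f OK m I (p - p') <->
  forall j, poly_cong (idealM (Q j) OK) p p'.
Proof.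
move=> [sp Op] [sp' Op']; have [OK0 _ OKD OKN _] := SK.
have spp' : (size (p - p')%R <= m)%N.
  by rewrite (leq_trans (size_polyD _ _)) // size_polyN geq_max sp sp'.
have OKpp' i : OK (p - p')`_i by rewrite coefB; exact: OKD (Op i) (OKN _ (Op' i)).
rewrite ideal_times_orderE //; split=> [Ipp' j i | Jpp' i].
  apply: ((idealM_big_ring_of_integers (OKpp' i)).1 _ j).
  by apply: idealM_monol (Ipp' i) => y /I_prod.
apply: idealM_monol (fun y => (I_prod y).2) _.
by apply: ((idealM_big_ring_of_integers (OKpp' i)).2) => j; exact: Jpp'.
Qed.
End OrderCRT.

Unset Implicit Arguments.

Theorem lemma2 (L : splittingFieldType rat) (F K : {subfield L})
  (s : gal_of K) (m : nat) (d : L)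
  (t : nat) (q : 'I_t -> (L -> Prop)) (e : 'I_t -> nat) (I : L -> Prop) :
  galois F K ->
  'Gal(K / F)%g = <[s]>%g ->
  \dim_F K = m ->
  (* d is a unit of O_K *)
  ring_of_integers K d -> d != 0 -> ring_of_integers K d^-1 ->
  (* t^m - d irreducible in K[t;sigma] *)
  skirreducible_in (fun x => s x) (fun x => x \in K) ('X^m - d%:P) ->
  (* the q_j are distinct prime ideals of O_F *)
  (forall j, prime_ideal (ring_of_integers F) (q j)) ->
  (forall i j, i != j -> ~ (forall x, q i x <-> q j x)) ->
  (* I = q_1^{e_1} ... q_t^{e_t} is a non-zero ideal of O_F *)
  (forall x, I x <->
     (\big[@idealM L/ring_of_integers F]_(j < t)
        idealX (ring_of_integers F) (q j) (e j)) x) ->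
  (exists2 x, I x & x != 0) ->
  let OK := ring_of_integers K in
  let sig := fun x : L => s x in
  let f := 'X^m - d%:P in
  let J := fun j : 'I_t =>
             idealM (idealX (ring_of_integers F) (q j) (e j)) OK in
  quot_ring_iso
    (* Lambda / I Lambda *)
    (in_order OK m)
    (fun p p' => ideal_times_order sig f OK m I (p - p'))
    +%R (petit_mul sig f) 1
    (* product over j of ((O_K/J_j)/(O_F/q_j^{e_j}), sigma-bar, d + J_j) *)
    (fun b : 'I_t -> {poly L} => forall j, in_order OK m (b j))
    (fun b b' => forall j, poly_cong (J j) (b j) (b' j))
    (fun b b' j => b j + b' j)
    (fun b b' j => petit_mul sig f (b j) (b' j))
    (fun _ => 1).
Proof.
move=> galFK _ dimFK _ _ _ _ q_prime q_neq I_prod [x0 Ix0 x0_neq0] OK sig f J.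
have FK : (F <= K)%VS by case/and3P: galFK.
have m_gt0 : (0 < m)%N.
  by rewrite -dimFK divn_gt0 ?adim_gt0 // dvdn_leq ?adim_gt0 // field_dimS.
have SF := ring_of_integers_subring F.
pose Q j := idealX (ring_of_integers F) (q j) (e j).
have IQ j : is_ideal (ring_of_integers F) (Q j).
  by apply: idealX_ideal => //; case: (q_prime j).
have Q_neq0 j : exists2 a, Q j a & a != 0.
  exists x0 => //; move/I_prod: Ix0; apply: (big_idealM_sub SF IQ).
  exact: mem_index_enum.
have Qcomax i j : i != j -> comax (Q i) (Q j).
  move=> ij; exact: (comax_idealX_prime_ideals (q_prime i) (q_prime j)
                       (Q_neq0 i) (Q_neq0 j) (q_neq i j ij)).
have cong_refl j p : poly_cong (J j) p p by move=> i; rewrite subrr coef0; apply: idealM0.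
exists (fun p _ => p); split=> [//|a a'|b Ob|a a' _ _ j|a a' _ _].
- exact: (ideal_times_order_congE IQ Qcomax sig (size_XnsubC _ m_gt0) I_prod).
- exact: (order_crt FK IQ Qcomax Ob).
- exact: cong_refl.
- by split=> j; apply: cong_refl.
Qed.
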